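(* Let $G$ be a $(\Delta+1)$-graph and let $H$ be a graph such that $\Delta(G)+1\ge |V(H)|-1-\Delta(H)$. Then $\chi_i(G\,\square\,H)\le \Delta(G\,\square\,H)+2$.
   Context: All graphs are finite and simple. An incidence of a graph $G$ is a pair $(v,e)$ with $v\in V(G)$, $e\in E(G)$ and $v\in e$. Two incidences $(v,e)$ and $(u,f)$ are adjacent if $v=u$, or $e=f$, or $vu\in\{e,f\}$. An incidence coloring of $G$ assigns colors to all incidences so that adjacent incidences receive distinct colors. $\chi_i(G)$ is the least number of colors in an incidence coloring of $G$. $\Delta(G)$ denotes the maximum degree. For a positive integer $k$, $G$ is a $(\Delta+k)$-graph if it admits an incidence coloring with at most $\Delta(G)+k$ colors. $G\,\square\,H$ denotes the Cartesian product: vertex set $V(G)\times V(H)$, with $(u,v)\sim(u',v')$ iff ($uu'\in E(G)$ and $v=v'$) or ($u=u'$ and $vv'\in E(H)$). *)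

From mathcomp Require Import all_boot.
Set Implicit Arguments. Unset Strict Implicit. Unset Printing Implicit Defensive.

(* A finite simple graph is a vertex finType V with an adjacency relation
   e : rel V that is symmetric and irreflexive (these are hypotheses of the
   theorem).  An incidence is a pair (v, w) with e v w, representing the
   incidence (v, vw). *)

Section Incidence.
Variables (V : finType) (e : rel V).

(* Adjacency of incidences (v,vw) and (u,ux):  v = u, or vw = ux, or
   vu in {vw, ux}.  For incidences, vw = ux means (v,w)=(u,x) or
   (v,w)=(x,u); vu = vw means u = w; vu = ux means x = v. *)
Definition inc_adj (p q : V * V) : bool :=
  [|| p.1 == q.1, (p.1 == q.2) && (p.2 == q.1), p.2 == q.1 | q.2 == p.1].

(* c is an incidence coloring with (at most) k colors {0,...,k-1}: every
   incidence gets a color < k, and distinct adjacent incidences get distinct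
   colors.  (Values of c at non-incidences are irrelevant; the codomain
   'I_k.+1 is only a finite carrier.) *)
Definition is_inc_coloring (k : nat) (c : {ffun V * V -> 'I_k.+1}) : bool :=
  [forall p : V * V, e p.1 p.2 ==> (c p < k)] &&
  [forall p : V * V, forall q : V * V,
     [&& e p.1 p.2, e q.1 q.2, p != q & inc_adj p q] ==> (c p != c q)].

Definition inc_colorable (k : nat) : bool :=
  [exists c : {ffun V * V -> 'I_k.+1}, is_inc_coloring c].

Lemma inc_colorable_exists : exists k, inc_colorable k.
Proof.
exists #|{: V * V}|; apply/existsP.
have lt (p : V * V) : enum_rank p < #|{: V * V}|.+1.
  by apply: ltnW; apply: ltn_ord.
exists [ffun p => inord (enum_rank p)].
apply/andP; split.
  by apply/forallP => p; apply/implyP => _; rewrite ffunE inordK.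
apply/forallP => p; apply/forallP => q; apply/implyP => /and4P [_ _ npq _].
rewrite !ffunE; apply: contra npq => /eqP /(congr1 val).
rewrite /= (inordK (lt p)) (inordK (lt q)) => /val_inj /enum_rank_inj ->.
by rewrite eqxx.
Qed.

Definition chi_i : nat := ex_minn inc_colorable_exists.

Definition deg (v : V) : nat := #|[set w | e v w]|.
Definition Delta : nat := \max_(v : V) deg v.

End Incidence.

Definition Delta_plus_graph (V : finType) (e : rel V) (k : nat) : bool :=
  inc_colorable e (Delta e + k).

Definition cartprod (V1 V2 : finType) (e1 : rel V1) (e2 : rel V2)
  : rel (V1 * V2) :=
  fun a b => (e1 a.1 b.1 && (a.2 == b.2)) || ((a.1 == b.1) && e2 a.2 b.2).

(** Colour the incidences of [G □ H] with [k := Δ(G) + Δ(H) + 2] colours.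
    Since [|V(H)| <= k], the vertices of [H] can be labelled injectively by
    colours [< k]; an incidence [((v,y),(v,z))] along an [H]-edge gets the
    label of [z].  For each [y], at least [k - (Δ(H) + 1) >= Δ(G) + 1] colours
    avoid the labels of the closed neighbourhood of [y]; an incidence
    [((v,y),(w,y))] along a [G]-edge gets the colour of [(v,vw)] in a
    [(Δ(G)+1)]-incidence colouring of [G], translated into that palette.
    Finally [k <= Δ(G □ H) + 2] because degrees add in the product. *)

From mathcomp Require Import all_boot zify.
Set Implicit Arguments. Unset Strict Implicit. Unset Printing Implicit Defensive.

Section IncidenceColoring.
Variables (V : finType) (e : rel V).

Definition inc_coloring_fun (k : nat) (col : V * V -> nat) : Prop :=
  (forall p, e p.1 p.2 -> col p < k) /\
  (forall p q, e p.1 p.2 -> e q.1 q.2 -> p != q -> inc_adj p q -> col p != col q).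

Lemma inc_colorableP k :
  reflect (exists col, inc_coloring_fun k col) (inc_colorable e k).
Proof.
apply: (iffP existsP) =>
  [[c /andP [/forallP c_lt /forallP c_adj]]|[col [col_lt col_adj]]].
  exists (fun p => val (c p)); split=> [p ep|p q ep eq npq pq].
    by have /implyP := c_lt p; apply.
  by have /forallP /(_ q) /implyP := c_adj p; apply; rewrite ep eq npq pq.
have col_le p : e p.1 p.2 -> col p < k.+1 by move/col_lt/ltnW.
exists [ffun p => inord (col p)]; apply/andP; split.
  by apply/forallP => p; apply/implyP => ep; rewrite ffunE inordK ?col_le ?col_lt.
apply/forallP => p; apply/forallP => q; apply/implyP => /and4P [ep eq npq pq].
rewrite !ffunE; apply: contra (col_adj p q ep eq npq pq) => /eqP/(congr1 val).
by rewrite /= !inordK ?col_le // => ->.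
Qed.

Lemma inc_colorable_widen m n :
  ((exists p : V * V, e p.1 p.2) -> m <= n) ->
  inc_colorable e m -> inc_colorable e n.
Proof.
move=> le_mn /inc_colorableP [col [col_lt col_adj]].
apply/inc_colorableP; exists col; split=> // p ep.
exact: leq_trans (col_lt p ep) (le_mn (ex_intro _ p ep)).
Qed.

Lemma chi_i_leq k : inc_colorable e k -> chi_i e <= k.
Proof. by rewrite /chi_i; case: ex_minnP => m _; apply. Qed.

(* Two incidences are adjacent iff they share their first vertex or are
   consecutive along a walk [u, w, x]. *)
Lemma inc_coloring_fun_local k col :
  (forall p, e p.1 p.2 -> col p < k) ->
  (forall u w w', e u w -> e u w' -> w != w' -> col (u, w) != col (u, w')) ->
  (forall u w x, e u w -> e w x -> col (u, w) != col (w, x)) ->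
  inc_coloring_fun k col.
Proof.
move=> col_lt col_star col_walk; split=> // -[u w] [u' w'] /= euw eu'w' npq.
rewrite /inc_adj /=.
case/or4P => [/eqP eq_u|/andP [/eqP eq_w' /eqP eq_u]|/eqP eq_u|/eqP eq_w'].
- subst u'; apply: col_star => //; apply: contra npq => /eqP ->; exact: eqxx.
- by subst u' w'; apply: col_walk.
- by subst u'; apply: col_walk.
- by subst w'; rewrite eq_sym; apply: col_walk.
Qed.

End IncidenceColoring.

Section CartesianProduct.
Variables (V1 V2 : finType) (e1 : rel V1) (e2 : rel V2).
Hypotheses (irr1 : irreflexive e1) (irr2 : irreflexive e2).
Local Notation e := (cartprod e1 e2).

Lemma cartprodP v y w z :
  e (v, y) (w, z) -> (e1 v w /\ y = z) \/ (v = w /\ e2 y z).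
Proof.
by rewrite /cartprod /= => /orP [/andP [? /eqP ->]|/andP [/eqP -> ?]]; [left|right].
Qed.

Lemma deg_cartprod v y : deg e1 v + deg e2 y <= deg e (v, y).
Proof.
set A := [set (w, y) | w in [set w | e1 v w]].
set B := [set (v, z) | z in [set z | e2 y z]].
have inj_y : injective (fun w : V1 => (w, y)) by move=> w w' [].
have inj_v : injective (fun z : V2 => (v, z)) by move=> z z' [].
rewrite /deg -(card_imset _ inj_y) -(card_imset _ inj_v) -/A -/B.
have AB0 : A :&: B = set0.
  apply/setP => p; rewrite in_setI in_set0; apply/negbTE/andP.
  by case=> /imsetP [w ew ->] /imsetP [z _ [vw _]]; move: ew; rewrite inE vw irr1.
rewrite -cardsUI AB0 cards0 addn0.
apply/subset_leq_card/subsetP => _ /setUP [] /imsetP [u eu ->];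
  by move: eu; rewrite !inE /cartprod /= eqxx => ->; rewrite ?orbT.
Qed.

(* [v] and [y] only witness nonemptiness: over an empty type [\max] is [0]. *)
Lemma Delta_cartprod (v : V1) (y : V2) : Delta e1 + Delta e2 <= Delta e.
Proof.
rewrite /Delta.
have [|v0 ->] := @eq_bigmax _ (deg e1); first by apply/card_gt0P; exists v.
have [|y0 ->] := @eq_bigmax _ (deg e2); first by apply/card_gt0P; exists y.
exact: leq_trans (deg_cartprod v0 y0) (leq_bigmax (F := deg e) (v0, y0)).
Qed.

Variables (a k : nat) (c : V1 * V1 -> nat).
Hypotheses (c_col : inc_coloring_fun e1 a c)
  (V2_le_k : #|V2| <= k) (a_lt_k : a + Delta e2 < k).

Let label (y : V2) : nat := enum_rank y.

Let cnbhd (y : V2) : {set V2} := y |: [set z | e2 y z].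

Let palette (y : V2) : seq nat :=
  [seq i <- iota 0 k | i \notin [seq label z | z in cnbhd y]].

Let shade (y : V2) (i : nat) : nat := nth 0 (palette y) i.

Lemma label_lt y : label y < k.
Proof. exact: leq_trans (ltn_ord _) V2_le_k. Qed.

Lemma label_inj : injective label.
Proof. by move=> y z /val_inj /enum_rank_inj. Qed.

Lemma size_palette y : a <= size (palette y).
Proof.
set S := [seq label z | z in cnbhd y].
have count_S : count (mem S) (iota 0 k) <= size S.
  rewrite -size_filter; apply: uniq_leq_size; first exact/filter_uniq/iota_uniq.
  by move=> i; rewrite mem_filter => /andP [].
have size_S : size S <= (Delta e2).+1.
  have : deg e2 y <= Delta e2 := leq_bigmax (F := deg e2) y.
  by rewrite size_image cardsU1 /deg; case: (_ \notin _) => /=; lia.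
have := count_predC (mem S) (iota 0 k); rewrite size_iota.
rewrite /palette size_filter -/S -[count _ (iota 0 k)]/(count (predC (mem S)) _); lia.
Qed.

Lemma shade_mem y i : i < a -> shade y i \in palette y.
Proof. by move=> lt_ia; apply/mem_nth/leq_trans/size_palette. Qed.

Lemma shade_lt y i : i < a -> shade y i < k.
Proof. by move/(shade_mem y); rewrite mem_filter mem_iota => /and3P []. Qed.

Lemma eq_shade y i j : i < a -> j < a -> (shade y i == shade y j) = (i == j).
Proof.
move=> lt_ia lt_ja; have size_y := size_palette y.
rewrite /shade nth_uniq ?(leq_trans lt_ia) ?(leq_trans lt_ja) //.
by rewrite filter_uniq ?iota_uniq.
Qed.

Lemma shade_label y z i : i < a -> (z == y) || e2 y z -> shade y i != label z.
Proof.
move=> lt_ia yz; have := shade_mem y lt_ia; rewrite mem_filter => /andP [].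
move=> not_in _; apply: contraNneq not_in => ->.
by apply: image_f; rewrite !inE.
Qed.

Let col (p : (V1 * V2) * (V1 * V2)) : nat :=
  if p.1.2 == p.2.2 then shade p.1.2 (c (p.1.1, p.2.1)) else label p.2.2.

Lemma cartprod_inc_colorable : inc_colorable e k.
Proof.
have [c_lt' c_adj] := c_col.
have c_lt v w : e1 v w -> c (v, w) < a := c_lt' (v, w).
have neq2 y z : e2 y z -> (y == z) = false.
  by apply: contraTF => /eqP ->; rewrite irr2.
apply/inc_colorableP; exists col; apply: inc_coloring_fun_local.
- move=> [[v y] [w z]] /cartprodP e_vw; rewrite /col /=.
  case: e_vw => [[vw <-]|[<- yz]]; rewrite ?eqxx ?neq2 //.
  + exact/shade_lt/c_lt.
  + exact: label_lt.
- move=> [v y] [w1 z1] [w2 z2] /cartprodP e_1 /cartprodP e_2 nw; rewrite /col /=.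
  case: e_1 e_2 => [[vw1 ?]|[? yz1]] [[vw2 ?]|[? yz2]]; subst; rewrite ?eqxx ?neq2 //.
  + rewrite eq_shade ?c_lt //; apply: c_adj => //; last by rewrite /inc_adj /= eqxx.
    by apply: contra nw => /eqP [->].
  + by rewrite shade_label ?c_lt ?yz2 ?orbT.
  + by rewrite eq_sym shade_label ?c_lt ?yz1 ?orbT.
  + by apply: contra nw => /eqP/label_inj ->.
- move=> [v y] [w z] [x t] /cartprodP e_1 /cartprodP e_2; rewrite /col /=.
  case: e_1 e_2 => [[vw ?]|[? yz]] [[wx ?]|[? zt]]; subst; rewrite ?eqxx ?neq2 //.
  + rewrite eq_shade ?c_lt //; apply: c_adj => //.
      by apply: contraTneq vw => -[-> _]; rewrite irr1.
    by rewrite /inc_adj /= eqxx !orbT.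
  + by rewrite shade_label ?c_lt ?zt ?orbT.
  + by rewrite eq_sym shade_label ?c_lt ?eqxx.
  + by apply/eqP => /label_inj zt_eq; move: zt; rewrite zt_eq irr2.
Qed.

End CartesianProduct.

Theorem mainTheorem3 (V1 V2 : finType) (e1 : rel V1) (e2 : rel V2)
  (sym1 : symmetric e1) (irr1 : irreflexive e1)
  (sym2 : symmetric e2) (irr2 : irreflexive e2) :
  Delta_plus_graph e1 1 ->
  #|V2| - 1 - Delta e2 <= Delta e1 + 1 ->
  chi_i (cartprod e1 e2) <= Delta (cartprod e1 e2) + 2.
Proof.
move=> /inc_colorableP [c c_col] small_V2.
pose k := (Delta e1 + Delta e2).+2.
have V2_le_k : #|V2| <= k by rewrite /k; lia.
have a_lt_k : Delta e1 + 1 + Delta e2 < k by rewrite /k; lia.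
have col_GH := cartprod_inc_colorable irr1 irr2 c_col V2_le_k a_lt_k.
apply/chi_i_leq/(inc_colorable_widen _ col_GH) => -[[[v y] _] _].
by have := Delta_cartprod e2 irr1 v y; rewrite /k; lia.
Qed.
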